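(* Let $\mathbf S$ and $\mathbf T$ be label cover instances such that $\mathbf S\to\pi_{\mathbf P}(\mathbf T)$. Then $\pi_{\mathbf B}(\mathbf S)\to\pi_{\mathbf B}(\mathbf T)$ for every structure $\mathbf B$.
   Context: Structures. A (multisorted relational) signature consists of types and relation symbols, each symbol $R$ having an arity $\mathrm{ar}_R$, a tuple of types. A structure $\mathbf A$ consists of a set $A_t$ per type and relations $R^{\mathbf A}\subseteq A_{\mathrm{ar}_R(1)}\times\dots\times A_{\mathrm{ar}_R(k)}$. A homomorphism is a type-preserving family of maps preserving all relations; write $\mathbf A\to\mathbf B$. For a finite set $X$, $\mathbf B^X$ has domains $B_t^X$ (maps $X\to B_t$) and $(b_1,\dots,b_m)\in R^{\mathbf B^X}$ iff $(b_1(i),\dots,b_m(i))\in R^{\mathbf B}$ for all $i\in X$. Label cover. The label cover signature has a type $X$ for each finite set $X$ and a binary symbol $E_\pi$ of arity $(X,Y)$ for each map $\pi\colon X\to Y$. The label cover template $\mathbf P$ has domain $P_X=X$ for each type $X$ and $E_\pi^{\mathbf P}=\{(x,\pi(x))\mid x\in X\}$. A label cover instance is a structure in this signature with finitely many nonempty domains, all finite. Universal gadget. For a structure $\mathbf B$ (in any signature, possibly the label cover signature itself) and a label cover instance $\mathbf S$, $\pi_{\mathbf B}(\mathbf S)$ is obtained by taking a copy of $\mathbf B^X$ for each element $s$ of type $X$ (elements $(s;b)$, $b\colon X\to B_t$), identifying $(s;b\circ\sigma)$ with $(t;b)$ for each $(s,t)\in E_\sigma^{\mathbf S}$ with $\sigma\colon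 X\to Y$ and each $b\colon Y\to B_u$, and taking the quotient by the generated equivalence relation, with relations the images of those of the copies. In particular $\pi_{\mathbf P}(\mathbf T)$ is a structure in the label cover signature. *)

From Stdlib Require Import Relations.
From Stdlib Require List.
From HB Require Import structures.
From mathcomp Require Import all_boot.

Record sig := Sig {
  ty : Type;
  sym : Type;
  arn : sym -> nat;
  art : forall R : sym, 'I_(arn R) -> ty }.

(* A structure: one domain per type, and for each symbol a relation on tuples
   (a tuple is a dependent function i |-> element of type ar_R(i)). *)
Record structure (S : sig) := Struct {
  dom : ty S -> Type;
  rel : forall R : sym S, (forall i : 'I_(arn S R), dom (art S R i)) -> Prop }.

Arguments dom {S} _ _.
Arguments rel {S} _ _ _.

Definition is_hom {S : sig} (A B : structure S)
    (h : forall t : ty S, dom A t -> dom B t) : Prop :=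
  forall (R : sym S) (tup : forall i, dom A (art S R i)),
    rel A R tup -> rel B R (fun i => h _ (tup i)).

Definition hom {S : sig} (A B : structure S) : Prop :=
  exists h : forall t : ty S, dom A t -> dom B t, is_hom A B h.

Definition pow {S : sig} (B : structure S) (X : finType) : structure S :=
  @Struct S (fun t => X -> dom B t)
    (fun R tup => forall x : X, rel B R (fun i => tup i x)).

(* types: finite sets X (finTypes); symbols: E_pi for each map pi : X -> Y *)
Definition LCsym : Type := {X : finType & {Y : finType & X -> Y}}.

Definition LCart (R : LCsym) (i : 'I_2) : finType :=
  match val i with 0 => projT1 R | _ => projT1 (projT2 R) end.

Definition LC : sig := @Sig finType LCsym (fun _ => 2) LCart.

Definition Esym {X Y : finType} (p : X -> Y) : LCsym :=
  existT _ X (existT _ Y p).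

(* The label cover template P: P_X = X, E_pi = graph of pi. *)
Definition P : structure LC :=
  @Struct LC (fun X : finType => (X : Type))
    (fun R tup => tup ord_max = projT2 (projT2 R) (tup ord0)).

(* A label cover instance: finitely many nonempty domains, all finite. *)
Definition finite_type (A : Type) : Prop :=
  exists l : list A, forall a : A, List.In a l.

Definition LCinstance (S : structure LC) : Prop :=
  (exists l : list finType, forall X : finType,
      inhabited (dom S X) -> List.In X l) /\
  (forall X : finType, finite_type (dom S X)).

Definition LCedge (S : structure LC) {X Y : finType} (p : X -> Y)
    (s : dom S X) (t : dom S Y) : Prop :=
  exists tup : (forall i : 'I_2, dom S (LCart (Esym p) i)),
    rel S (Esym p) tup /\ tup ord0 = s /\ tup ord_max = t.

Definition quot {A : Type} (R : A -> A -> Prop) : Type :=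
  {C : A -> Prop | exists a : A, C = clos_refl_sym_trans A R a}.

Definition cls {A : Type} (R : A -> A -> Prop) (a : A) : quot R :=
  exist _ (clos_refl_sym_trans A R a) (ex_intro _ a erefl).

(* raw elements of type u: (s; b) with s of type X in S and b : X -> B_u *)
Definition graw {Sg : sig} (B : structure Sg) (S : structure LC) (u : ty Sg)
  : Type := {X : finType & (dom S X * (X -> dom B u))%type}.

Definition gR (Sg : sig) (B : structure Sg) (S : structure LC) (u : ty Sg)
    (a a' : @graw Sg B S u) : Prop :=
  exists (X Y : finType) (sigma : X -> Y) (s : dom S X) (t : dom S Y)
         (b : Y -> dom B u),
    LCedge S sigma s t /\
    a = existT _ X (s, b \o sigma) /\ a' = existT _ Y (t, b).

Definition gadget {Sg : sig} (B : structure Sg) (S : structure LC)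
  : structure Sg :=
  @Struct Sg (fun u => quot (@gR Sg B S u))
    (fun R c => exists (X : finType) (s : dom S X)
                       (b : forall i, X -> dom B (art Sg R i)),
        rel (pow B X) R b /\
        forall i, c i = cls (@gR Sg B S _) (existT _ X (s, b i))).

(* An element of type X of pi_P(T) is a class of pairs (t; x) with t : T_Y and
   x : Y -> X, so a homomorphism h : S -> pi_P(T) attaches to every s : S_X a
   representative (t_s; x_s).  Send (s; b) to (t_s; b \o x_s).  An edge
   (s, s') in E_sigma is mapped by h to the class of (w; x) and (w; sigma \o x)
   for a common w, so (s; b \o sigma) and (s'; b) are sent to the same class;
   and b in B^X is carried to b \o x_s in B^Y, so relations are preserved. *)

From Stdlib Require Import Relations ClassicalEpsilon FunctionalExtensionality
  PropExtensionality ProofIrrelevance.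
From HB Require Import structures.
From mathcomp Require Import all_boot.

Set Implicit Arguments.

Notation clos := (clos_refl_sym_trans _).

Lemma clos_map (A A' : Type) (R : A -> A -> Prop) (R' : A' -> A' -> Prop)
    (f : A -> A') :
  (forall a a', R a a' -> clos R' (f a) (f a')) ->
  forall a a', clos R a a' -> clos R' (f a) (f a').
Proof.
move=> Hf a a'; elim=> {a a'} [x y /Hf //|x|x y _ H|x y z _ H1 _ H2].
- exact: rst_refl.
- exact: rst_sym.
- exact: rst_trans H2.
Qed.

Section Quotient.
Variables (A : Type) (R : A -> A -> Prop).

Lemma cls_eq (a a' : A) : clos R a a' -> cls R a = cls R a'.
Proof.
move=> Haa'.
have Hc : clos R a = clos R a'.
  apply: functional_extensionality => x; apply: propositional_extensionality.
  split=> Hx; [exact: rst_trans (rst_sym _ _ _ _ Haa') Hx | exact: rst_trans Hx].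
exact: (eq_sig (cls R a) (cls R a') Hc (proof_irrelevance _ _ _)).
Qed.

Definition repr (C : quot R) : A :=
  proj1_sig (constructive_indefinite_description _ (proj2_sig C)).

Lemma clos_repr_cls (a : A) : clos R (repr (cls R a)) a.
Proof.
rewrite /repr; case: constructive_indefinite_description => /= a0 Ha0.
by rewrite -Ha0; apply: rst_refl.
Qed.

End Quotient.

Section QuotientMap.
Variables (A A' : Type) (R : A -> A -> Prop) (R' : A' -> A' -> Prop).
Variables (f : A -> A') (f_resp : forall a a', R a a' -> clos R' (f a) (f a')).

Definition quot_map (C : quot R) : quot R' := cls R' (f (repr C)).

Lemma quot_map_cls (a : A) : quot_map (cls R a) = cls R' (f a).
Proof. exact: cls_eq (clos_map f f_resp (clos_repr_cls R a)). Qed.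

End QuotientMap.

Arguments quot_map {A A' R R'} f C.
Arguments quot_map_cls {A A' R R' f} f_resp a.

(* The identifications of the gadget only touch the label cover coordinate,
   so raw elements can be pushed along any map of domains B'_u' -> B_u. *)
Section GadgetMap.
Variables (Sg Sg' : sig) (B : structure Sg) (B' : structure Sg')
  (T : structure LC) (u : ty Sg) (u' : ty Sg') (phi : dom B' u' -> dom B u).

Definition graw_map (r : graw B' T u') : graw B T u :=
  existT _ (projT1 r) ((projT2 r).1, phi \o (projT2 r).2).

Lemma clos_graw_map (r r' : graw B' T u') :
  clos (@gR Sg' B' T u') r r' ->
  clos (@gR Sg B T u) (graw_map r) (graw_map r').
Proof.
apply: clos_map => _ _ [X [Y [sg [s [t [b [E [-> ->]]]]]]]].
by apply: rst_step; exists X, Y, sg, s, t, (phi \o b).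
Qed.

End GadgetMap.

Arguments graw_map {Sg Sg' B B' T u u'} phi r.
Arguments clos_graw_map {Sg Sg' B B' T u u'} phi [r r'].

Lemma gadgetP_edge (S T : structure LC) h (X Y : finType) (sigma : X -> Y)
    (s : dom S X) (s' : dom S Y) :
  is_hom S (gadget P T) h -> LCedge S sigma s s' ->
  exists (W : finType) (w : dom T W) (x : W -> X),
    h X s = cls _ (existT _ W (w, x)) /\
    h Y s' = cls _ (existT _ W (w, sigma \o x)).
Proof.
move=> Hh [tup [Htup [<- <-]]].
have [W [w [c [Hc Hci]]]] := Hh (Esym sigma) tup Htup.
exists W, w, (c ord0); split; first exact: (Hci ord0).
have -> : sigma \o c ord0 = c ord_max by apply: functional_extensionality => z; rewrite Hc.
exact: (Hci ord_max).
Qed.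

Section Transfer.
Variables (S T : structure LC) (Sg : sig) (B : structure Sg).
Variables (h : forall X : finType, dom S X -> dom (gadget P T) X)
  (h_hom : is_hom S (gadget P T) h).

Definition transfer_raw (u : ty Sg) (a : graw B S u) : graw B T u :=
  graw_map (B' := P) (u' := projT1 a) (projT2 a).2 (repr (h _ (projT2 a).1)).

Lemma transfer_raw_resp (u : ty Sg) (a a' : graw B S u) :
  @gR Sg B S u a a' -> clos (@gR Sg B T u) (transfer_raw a) (transfer_raw a').
Proof.
move=> [X [Y [sg [s [s' [b [Hedge [-> ->]]]]]]]].
have [W [w [x [Hs Hs']]]] := gadgetP_edge h_hom Hedge.
apply: (rst_trans _ _ _ (graw_map (B' := P) (u' := X) (b \o sg) (existT _ W (w, x)))).
  by apply: clos_graw_map; rewrite Hs; apply: clos_repr_cls.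
have -> : graw_map (B' := P) (u' := X) (b \o sg) (existT _ W (w, x)) =
          graw_map (B' := P) (u' := Y) b (existT _ W (w, sg \o x)) by [].
by apply: rst_sym; apply: clos_graw_map; rewrite Hs'; apply: clos_repr_cls.
Qed.

Definition transfer (u : ty Sg) : quot (@gR Sg B S u) -> quot (@gR Sg B T u) :=
  quot_map (@transfer_raw u).

Lemma transfer_hom : is_hom (gadget B S) (gadget B T) transfer.
Proof.
move=> R c [X [s [b [Hb Hc]]]].
set r := repr (h X s).
exists (projT1 r), (projT2 r).1, (fun i => b i \o (projT2 r).2); split.
- by move=> z; apply: Hb.
- by move=> i; rewrite Hc /transfer (quot_map_cls (@transfer_raw_resp _)).
Qed.

End Transfer.

Theorem mainTheorem17 (S T : structure LC) :
  LCinstance S -> LCinstance T ->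
  hom S (gadget P T) ->
  forall (Sg : sig) (B : structure Sg), hom (gadget B S) (gadget B T).
Proof.
(* The construction needs no finiteness of S or T. *)
move=> _ _ [h h_hom] Sg B.
exists (@transfer S T Sg B h); exact: transfer_hom.
Qed.
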